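(* Let $A$ be a sequence algebra and $X$ an essential homogeneous normed $A$-module. Then for every $x\in X$, $x=\lim_{N\to\infty}\mathbf P^N\cdot x$, where $\mathbf P^N:=\sum_{n=1}^N\mathbf p^n$.
   Context: Modules are contractive ($\|a\cdot x\|\le\|a\|\|x\|$). A sequence algebra is a normed algebra of complex sequences with coordinatewise operations containing $c_{00}$ (finite sequences) as a dense subalgebra, with $\|\mathbf p^n\|=1$, where $\mathbf p^n$ has $1$ in place $n$ and $0$ elsewhere. For $x\in X$, $x_n:=\mathbf p^n\cdot x$. $X$ is essential if the closed linear span of $\{a\cdot x:a\in A,x\in X\}$ is $X$; homogeneous if for $x,y\in X$, $\|x_n\|\le\|y_n\|$ for all $n$ implies $\|x\|\le\|y\|$. *)

From Stdlib Require Import Reals List.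
Open Scope R_scope.

Record C := mkC { Cre : R; Cim : R }.
Definition C0 : C := mkC 0 0.
Definition C1 : C := mkC 1 0.
Definition Cadd (z w : C) : C := mkC (Cre z + Cre w) (Cim z + Cim w).
Definition Copp (z : C) : C := mkC (- Cre z) (- Cim z).
Definition Cmul (z w : C) : C :=
  mkC (Cre z * Cre w - Cim z * Cim w) (Cre z * Cim w + Cim z * Cre w).
Definition Cmod (z : C) : R := sqrt (Cre z ^ 2 + Cim z ^ 2).

Definition cseq := nat -> C.
Definition szero : cseq := fun _ => C0.
Definition sadd (a b : cseq) : cseq := fun k => Cadd (a k) (b k).
Definition sopp (a : cseq) : cseq := fun k => Copp (a k).
Definition ssub (a b : cseq) : cseq := sadd a (sopp b).
Definition smul (a b : cseq) : cseq := fun k => Cmul (a k) (b k).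
Definition sscal (c : C) (a : cseq) : cseq := fun k => Cmul c (a k).

Definition pn (n : nat) : cseq := fun k => if Nat.eqb k n then C1 else C0.

(** P^N := p^0 + ... + p^(N-1)  (the N first unit sequences) *)
Fixpoint PN (N : nat) : cseq :=
  match N with
  | O => szero
  | S N' => sadd (PN N') (pn N')
  end.

Definition finite_seq (a : cseq) : Prop :=
  exists M : nat, forall k, (M <= k)%nat -> a k = C0.

Record SeqAlgebra := {
  inA : cseq -> Prop;
  normA : cseq -> R;
  inA_zero : inA szero;
  inA_add : forall a b, inA a -> inA b -> inA (sadd a b);
  inA_scal : forall c a, inA a -> inA (sscal c a);
  inA_mul : forall a b, inA a -> inA b -> inA (smul a b);
  normA_nonneg : forall a, inA a -> 0 <= normA a;
  normA_eq0 : forall a, inA a -> normA a = 0 -> a = szero;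
  normA_triangle : forall a b, inA a -> inA b ->
      normA (sadd a b) <= normA a + normA b;
  normA_scal : forall c a, inA a -> normA (sscal c a) = Cmod c * normA a;
  normA_submult : forall a b, inA a -> inA b ->
      normA (smul a b) <= normA a * normA b;
  inA_c00 : forall a, finite_seq a -> inA a;
  c00_dense : forall a, inA a -> forall eps, 0 < eps ->
      exists b, finite_seq b /\ normA (ssub a b) < eps;
  normA_pn : forall n, normA (pn n) = 1
}.

Record NormedModule (A : SeqAlgebra) := {
  X :> Type;
  Xzero : X;
  Xadd : X -> X -> X;
  Xopp : X -> X;
  Xscal : C -> X -> X;
  Xnorm : X -> R;
  act : cseq -> X -> X;
  Xadd_assoc : forall x y z, Xadd x (Xadd y z) = Xadd (Xadd x y) z;
  Xadd_comm : forall x y, Xadd x y = Xadd y x;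
  Xadd_zero : forall x, Xadd Xzero x = x;
  Xadd_opp : forall x, Xadd x (Xopp x) = Xzero;
  Xscal_one : forall x, Xscal C1 x = x;
  Xscal_assoc : forall c d x, Xscal (Cmul c d) x = Xscal c (Xscal d x);
  Xscal_addr : forall c x y, Xscal c (Xadd x y) = Xadd (Xscal c x) (Xscal c y);
  Xscal_addl : forall c d x, Xscal (Cadd c d) x = Xadd (Xscal c x) (Xscal d x);
  Xnorm_nonneg : forall x, 0 <= Xnorm x;
  Xnorm_eq0 : forall x, Xnorm x = 0 -> x = Xzero;
  Xnorm_triangle : forall x y, Xnorm (Xadd x y) <= Xnorm x + Xnorm y;
  Xnorm_scal : forall c x, Xnorm (Xscal c x) = Cmod c * Xnorm x;
  act_addr : forall a x y, inA A a ->
      act a (Xadd x y) = Xadd (act a x) (act a y);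
  act_addl : forall a b x, inA A a -> inA A b ->
      act (sadd a b) x = Xadd (act a x) (act b x);
  act_scall : forall c a x, inA A a -> act (sscal c a) x = Xscal c (act a x);
  act_scalr : forall c a x, inA A a -> act a (Xscal c x) = Xscal c (act a x);
  act_mul : forall a b x, inA A a -> inA A b ->
      act (smul a b) x = act a (act b x);
  act_contr : forall a x, inA A a -> Xnorm (act a x) <= normA A a * Xnorm x
}.

Arguments Xzero {A} _.
Arguments Xadd {A} _ _ _.
Arguments Xopp {A} _ _.
Arguments Xscal {A} _ _ _.
Arguments Xnorm {A} _ _.
Arguments act {A} _ _ _.

Definition Xsub {A} (M : NormedModule A) (x y : M) : M := Xadd M x (Xopp M y).

Fixpoint lincomb {A} (M : NormedModule A) (l : list (C * M)) : M :=
  match l with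
  | nil => Xzero M
  | (c, s) :: l' => Xadd M (Xscal M c s) (lincomb M l')
  end.

Definition in_closed_span {A} (M : NormedModule A) (S : M -> Prop) (x : M) : Prop :=
  forall eps, 0 < eps -> exists l : list (C * M),
    (forall cs, In cs l -> S (snd cs)) /\ Xnorm M (Xsub M x (lincomb M l)) < eps.

Definition essential {A} (M : NormedModule A) : Prop :=
  forall x : M, in_closed_span M (fun z => exists a y, inA A a /\ z = act M a y) x.

Definition homogeneous {A} (M : NormedModule A) : Prop :=
  forall x y : M, (forall n, Xnorm M (act M (pn n) x) <= Xnorm M (act M (pn n) y)) ->
    Xnorm M x <= Xnorm M y.

Definition converges_to {A} (M : NormedModule A) (u : nat -> M) (l : M) : Prop :=
  forall eps, 0 < eps -> exists N0, forall N, (N0 <= N)%nat -> Xnorm M (Xsub M (u N) l) < eps.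

(* Let T_N x := P^N . x. Homogeneity makes every T_N a contraction: the coordinates of
   T_N x are those of x or zero.  Hence the set of x with T_N x -> x is a closed linear
   subspace.  It contains every a . y: approximate a in A by some finite b, for which
   T_N (b . y) = b . y as soon as N exceeds the support of b.  By essentiality this
   closed subspace is all of X. *)
From Stdlib Require Import Reals List Lra Lia FunctionalExtensionality.
(* Imported after Reals, whose [C] and [C1] would otherwise shadow the complex numbers. *)
Open Scope R_scope.

Lemma C_ext (z w : C) : Cre z = Cre w -> Cim z = Cim w -> z = w.
Proof. destruct z, w; simpl; intros -> ->; reflexivity. Qed.

Lemma Cmul1l z : Cmul C1 z = z.
Proof. apply C_ext; destruct z; simpl; ring. Qed.
Lemma Cmul1r z : Cmul z C1 = z.
Proof. apply C_ext; destruct z; simpl; ring. Qed.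
Lemma Cmul0l z : Cmul C0 z = C0.
Proof. apply C_ext; destruct z; simpl; ring. Qed.
Lemma Cmul0r z : Cmul z C0 = C0.
Proof. apply C_ext; destruct z; simpl; ring. Qed.
Lemma Cadd0l z : Cadd C0 z = z.
Proof. apply C_ext; destruct z; simpl; ring. Qed.
Lemma Cadd0r z : Cadd z C0 = z.
Proof. apply C_ext; destruct z; simpl; ring. Qed.
Lemma CmulC z w : Cmul z w = Cmul w z.
Proof. apply C_ext; destruct z, w; simpl; ring. Qed.

Lemma Cmod_ge0 z : 0 <= Cmod z.
Proof. apply sqrt_pos. Qed.
Lemma Cmod0 : Cmod C0 = 0.
Proof. unfold Cmod; simpl. transitivity (sqrt 0); [f_equal; ring | apply sqrt_0]. Qed.
Lemma Cmod_opp1 : Cmod (Copp C1) = 1.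
Proof. unfold Cmod; simpl. transitivity (sqrt 1); [f_equal; ring | apply sqrt_1]. Qed.

Lemma PN_spec N k : PN N k = if Nat.ltb k N then C1 else C0.
Proof.
  induction N as [|N IH]; simpl; [now destruct k|].
  unfold sadd, pn. rewrite IH.
  destruct (Nat.ltb_spec k N), (Nat.eqb_spec k N), (Nat.ltb_spec k (S N)) ; try lia;
    (rewrite Cadd0r || rewrite Cadd0l); reflexivity.
Qed.

Lemma finite_PN N : finite_seq (PN N).
Proof. exists N. intros k Hk. rewrite PN_spec. destruct (Nat.ltb_spec k N); [lia | reflexivity]. Qed.

Lemma finite_pn n : finite_seq (pn n).
Proof. exists (S n). intros k Hk. unfold pn. destruct (Nat.eqb_spec k n); [lia | reflexivity]. Qed.

Lemma smul_pn_PN n N :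
  smul (pn n) (PN N) = if Nat.ltb n N then pn n else sscal C0 (pn n).
Proof.
  apply functional_extensionality; intro k. unfold smul, sscal. rewrite PN_spec. unfold pn.
  destruct (Nat.ltb_spec n N), (Nat.eqb_spec k n), (Nat.ltb_spec k N); subst; try lia;
    rewrite ?Cmul1l, ?Cmul0l, ?Cmul1r, ?Cmul0r; reflexivity.
Qed.

Lemma smul_PN_finite b K N : (forall k, (K <= k)%nat -> b k = C0) -> (K <= N)%nat ->
  smul (PN N) b = b.
Proof.
  intros Hb HN. apply functional_extensionality; intro k. unfold smul. rewrite PN_spec.
  destruct (Nat.ltb_spec k N).
  - apply Cmul1l.
  - rewrite Hb by lia. apply Cmul0r.
Qed.

Lemma sopp_sscal a : sopp a = sscal (Copp C1) a.
Proof.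
  apply functional_extensionality; intro k. unfold sscal, sopp.
  apply C_ext; destruct (a k); simpl; ring.
Qed.

Section NormedModuleFacts.
Variable A : SeqAlgebra.
Variable M : NormedModule A.

Lemma Xscal0 v : Xscal M C0 v = Xzero M.
Proof. apply Xnorm_eq0. rewrite Xnorm_scal, Cmod0. ring. Qed.

Lemma Xnorm0 : Xnorm M (Xzero M) = 0.
Proof. rewrite <- (Xscal0 (Xzero M)), Xnorm_scal, Cmod0. ring. Qed.

Lemma Xadd0r v : Xadd M v (Xzero M) = v.
Proof. rewrite Xadd_comm. apply Xadd_zero. Qed.

Lemma Xopp_scal v : Xopp M v = Xscal M (Copp C1) v.
Proof.
  assert (Hsum : Xadd M (Xscal M (Copp C1) v) v = Xzero M).
  { rewrite <- (Xscal_one _ M v) at 2. rewrite <- Xscal_addl.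
    replace (Cadd (Copp C1) C1) with C0 by (apply C_ext; simpl; ring).
    apply Xscal0. }
  rewrite <- (Xadd_zero _ M (Xopp M v)), <- Hsum, <- Xadd_assoc, Xadd_opp. apply Xadd0r.
Qed.

Lemma Xscal_opp c v : Xscal M c (Xopp M v) = Xopp M (Xscal M c v).
Proof. rewrite !Xopp_scal, <- !Xscal_assoc, CmulC. reflexivity. Qed.

Lemma Xopp_add u v : Xopp M (Xadd M u v) = Xadd M (Xopp M u) (Xopp M v).
Proof. rewrite !Xopp_scal. apply Xscal_addr. Qed.

Lemma XoppK v : Xopp M (Xopp M v) = v.
Proof.
  rewrite !Xopp_scal, <- Xscal_assoc.
  replace (Cmul (Copp C1) (Copp C1)) with C1 by (apply C_ext; simpl; ring).
  apply Xscal_one.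
Qed.

Lemma Xsubv v : Xsub M v v = Xzero M.
Proof. apply Xadd_opp. Qed.

Lemma Xsub_add u v u' v' :
  Xsub M (Xadd M u v) (Xadd M u' v') = Xadd M (Xsub M u u') (Xsub M v v').
Proof.
  unfold Xsub. rewrite Xopp_add, <- !Xadd_assoc. f_equal.
  rewrite !Xadd_assoc. f_equal. apply Xadd_comm.
Qed.

Lemma Xsub_scal c u v : Xsub M (Xscal M c u) (Xscal M c v) = Xscal M c (Xsub M u v).
Proof. unfold Xsub. rewrite Xscal_addr, Xscal_opp. reflexivity. Qed.

Lemma Xnorm_subC u v : Xnorm M (Xsub M u v) = Xnorm M (Xsub M v u).
Proof.
  rewrite <- (XoppK (Xsub M v u)), Xopp_scal, Xnorm_scal, Cmod_opp1, Rmult_1_l.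
  unfold Xsub. rewrite Xopp_add, XoppK, Xadd_comm. reflexivity.
Qed.

Lemma Xnorm_sub_triangle u v w :
  Xnorm M (Xsub M u w) <= Xnorm M (Xsub M u v) + Xnorm M (Xsub M v w).
Proof.
  replace (Xsub M u w) with (Xadd M (Xsub M u v) (Xsub M v w)) by
    (unfold Xsub; rewrite <- Xadd_assoc, (Xadd_assoc _ M (Xopp M v)),
       (Xadd_comm _ M (Xopp M v)), Xadd_opp, Xadd_zero; reflexivity).
  apply Xnorm_triangle.
Qed.

Lemma act_sub a b x : inA A a -> inA A b ->
  act M (ssub a b) x = Xsub M (act M a x) (act M b x).
Proof.
  intros Ha Hb. assert (Hb' : inA A (sscal (Copp C1) b)) by now apply inA_scal.
  unfold ssub, Xsub. rewrite sopp_sscal, act_addl, act_scall, <- Xopp_scal by assumption.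
  reflexivity.
Qed.

Lemma act_Xsub a x y : inA A a ->
  act M a (Xsub M x y) = Xsub M (act M a x) (act M a y).
Proof.
  intros Ha. unfold Xsub. rewrite act_addr, !Xopp_scal, act_scalr by assumption.
  reflexivity.
Qed.

Lemma converges_to_add u v l l' : converges_to M u l -> converges_to M v l' ->
  converges_to M (fun N => Xadd M (u N) (v N)) (Xadd M l l').
Proof.
  intros Hu Hv eps Heps.
  destruct (Hu (eps / 2)) as [N1 H1]; [lra|].
  destruct (Hv (eps / 2)) as [N2 H2]; [lra|].
  exists (max N1 N2). intros N HN.
  specialize (H1 N ltac:(lia)). specialize (H2 N ltac:(lia)).
  rewrite Xsub_add. pose proof (Xnorm_triangle _ M (Xsub M (u N) l) (Xsub M (v N) l')).
  lra.
Qed.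

Lemma converges_to_scal c u l : converges_to M u l ->
  converges_to M (fun N => Xscal M c (u N)) (Xscal M c l).
Proof.
  intros Hu eps Heps. pose proof (Cmod_ge0 c).
  destruct (Hu (eps / (Cmod c + 1))) as [N0 H0]; [apply Rdiv_lt_0_compat; lra|].
  exists N0. intros N HN. specialize (H0 N HN).
  rewrite Xsub_scal, Xnorm_scal.
  pose proof (Xnorm_nonneg _ M (Xsub M (u N) l)).
  apply Rmult_lt_compat_l with (r := Cmod c + 1) in H0; [|lra].
  replace ((Cmod c + 1) * (eps / (Cmod c + 1))) with eps in H0 by (field; lra).
  nra.
Qed.

End NormedModuleFacts.

Lemma inA_PN (A : SeqAlgebra) N : inA A (PN N).
Proof. apply inA_c00, finite_PN. Qed.

Lemma inA_pn (A : SeqAlgebra) n : inA A (pn n).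
Proof. apply inA_c00, finite_pn. Qed.

Section Truncations.
Variable A : SeqAlgebra.
Variable M : NormedModule A.
Hypothesis Hhom : homogeneous M.

Definition PN_converges (x : M) : Prop := converges_to M (fun N => act M (PN N) x) x.

Lemma act_PN_contr N x : Xnorm M (act M (PN N) x) <= Xnorm M x.
Proof.
  apply Hhom. intro n.
  rewrite <- act_mul, smul_pn_PN by (apply inA_pn || apply inA_PN).
  destruct (Nat.ltb n N); [apply Rle_refl|].
  rewrite act_scall, Xnorm_scal, Cmod0, Rmult_0_l by apply inA_pn.
  apply Xnorm_nonneg.
Qed.

Lemma PN_converges_closed x :
  (forall e, 0 < e -> exists y, PN_converges y /\ Xnorm M (Xsub M x y) < e) ->
  PN_converges x.
Proof.
  intros Happrox eps Heps.
  destruct (Happrox (eps / 3)) as [y [Hy Hxy]]; [lra|].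
  destruct (Hy (eps / 3)) as [N0 HN0]; [lra|].
  exists N0. intros N HN. specialize (HN0 N HN).
  pose proof (Xnorm_sub_triangle _ M (act M (PN N) x) (act M (PN N) y) x).
  pose proof (Xnorm_sub_triangle _ M (act M (PN N) y) y x).
  pose proof (act_PN_contr N (Xsub M x y)).
  pose proof (Xnorm_subC _ M x y).
  rewrite act_Xsub in * by apply inA_PN.
  lra.
Qed.

Lemma PN_converges_add x y :
  PN_converges x -> PN_converges y -> PN_converges (Xadd M x y).
Proof.
  intros Hx Hy. unfold PN_converges.
  rewrite (functional_extensionality _ _ (fun N => act_addr _ M (PN N) x y (inA_PN A N))).
  apply converges_to_add; assumption.
Qed.

Lemma PN_converges_scal c x : PN_converges x -> PN_converges (Xscal M c x).
Proof.
  intros Hx. unfold PN_converges.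
  rewrite (functional_extensionality _ _ (fun N => act_scalr _ M c (PN N) x (inA_PN A N))).
  apply converges_to_scal; assumption.
Qed.

Lemma PN_converges_act_finite b x : finite_seq b -> PN_converges (act M b x).
Proof.
  intros [K HK] eps Heps. exists K. intros N HN.
  rewrite <- act_mul, (smul_PN_finite b K N HK HN), Xsubv, Xnorm0
    by (apply inA_PN || (apply inA_c00; exists K; exact HK)).
  exact Heps.
Qed.

Lemma PN_converges_zero : PN_converges (Xzero M).
Proof.
  rewrite <- (Xscal0 _ M (act M szero (Xzero M))).
  apply PN_converges_scal, PN_converges_act_finite. exists O. reflexivity.
Qed.

Lemma PN_converges_lincomb (l : list (C * M)) :
  (forall cs, In cs l -> PN_converges (snd cs)) -> PN_converges (lincomb M l).
Proof.
  induction l as [|[c s] l IH]; intro Hl; simpl; [apply PN_converges_zero|].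
  apply PN_converges_add.
  - apply PN_converges_scal, (Hl (c, s)). left; reflexivity.
  - apply IH. intros cs Hcs. apply Hl. right; exact Hcs.
Qed.

Lemma PN_converges_closed_span (S : M -> Prop) x :
  (forall y, S y -> PN_converges y) -> in_closed_span M S x -> PN_converges x.
Proof.
  intros HS Hx. apply PN_converges_closed. intros e He.
  destruct (Hx e He) as [l [Hl Hxl]].
  exists (lincomb M l). split; [|exact Hxl].
  apply PN_converges_lincomb. intros cs Hcs. apply HS, Hl, Hcs.
Qed.

Lemma PN_converges_act a x : inA A a -> PN_converges (act M a x).
Proof.
  intros Ha. apply PN_converges_closed. intros e He.
  pose proof (Xnorm_nonneg _ M x).
  destruct (c00_dense A a Ha (e / (Xnorm M x + 1))) as [b [Hb Hab]];
    [apply Rdiv_lt_0_compat; lra|].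
  assert (HbA : inA A b) by now apply inA_c00.
  exists (act M b x). split; [now apply PN_converges_act_finite|].
  rewrite <- act_sub by assumption.
  assert (Hdiff : inA A (ssub a b)).
  { apply inA_add; [exact Ha|]. rewrite sopp_sscal. now apply inA_scal. }
  pose proof (act_contr A M (ssub a b) x Hdiff).
  pose proof (normA_nonneg A _ Hdiff).
  apply Rmult_lt_compat_r with (r := Xnorm M x + 1) in Hab; [|lra].
  replace (e / (Xnorm M x + 1) * (Xnorm M x + 1)) with e in Hab by (field; lra).
  nra.
Qed.

End Truncations.

Theorem proposition1p5 (A : SeqAlgebra) (M : NormedModule A)
  (Hess : essential M) (Hhom : homogeneous M) :
  forall x : M, converges_to M (fun N => act M (PN N) x) x.
Proof.
  intro x. apply (PN_converges_closed_span A M Hhom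
    (fun y => exists a z, inA A a /\ y = act M a z)); [|apply Hess].
  intros y [a [z [Ha ->]]]. apply (PN_converges_act A M Hhom), Ha.
Qed.
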